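(* Let $\mathcal{M}=(S,A,\delta)$ be a finite fuzzy transition system with discounting factor $\gamma\in(0,1)$, let $\epsilon\in(0,1]$, and let $N=\lceil \log\epsilon/\log\gamma\rceil$. Then $\|\Delta^N(d_0)-d^\gamma_f\|\le\epsilon$, where $d_0=\bot$ is the constant-zero function on $S\times S$ and $\|e\|=\max_{s,t\in S}|e(s,t)|$.
   Context: A fuzzy set on a finite set $X$ is a map $\mu:X\to[0,1]$; $\mathcal{F}(X)$ is the set of fuzzy sets on $X$; $\mu(U)=\max_{x\in U}\mu(x)$. A fuzzy transition system is $\mathcal{M}=(S,A,\delta)$ with $S,A$ finite and $\delta:S\times A\to\mathcal{P}(\mathcal{F}(S))$, each $\delta(s,a)$ finite. $\mathcal{D}(S)$ is the set of pseudo-ultrametrics $d:S\times S\to[0,1]$, ordered pointwise. Lifting: $\hat d(\mu,\eta)=1$ if $\mu(S)\ne\eta(S)$, and otherwise $\hat d(\mu,\eta)$ is the minimum of $\max_{u,v}\min(d(u,v),x_{uv})$ over $x_{uv}\ge0$ with $\max_v x_{uv}=\mu(u)$ for all $u$ and $\max_u x_{uv}=\eta(v)$ for all $v$. For finite $Z\subseteq\mathcal{F}(S)$: $\hat d(\mu,Z)=\min_{\eta\in Z}\hat d(\mu,\eta)$ if $Z\ne\emptyset$, else $1$. Hausdorff distance: $H_{\hat d}(\emptyset,\emptyset)=0$, otherwise $H_{\hat d}(Y,Z)=\max(\max_{\mu\in Y}\hat d(\mu,Z),\max_{\eta\in Z}\hat d(\eta,Y))$. $\Delta(d)(s,t)=\gamma\cdot\max_{a\in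 A}H_{\hat d}(\delta(s,a),\delta(t,a))$ is a monotone map $\mathcal{D}(S)\to\mathcal{D}(S)$, and the behavioural distance $d^\gamma_f$ is its least fixpoint. *)

From HB Require Import structures.
From mathcomp Require Import all_boot all_order all_algebra.
From mathcomp Require Import all_classical all_reals all_analysis.
Set Implicit Arguments. Unset Strict Implicit. Unset Printing Implicit Defensive.
Import Order.TTheory GRing.Theory Num.Theory.
Local Open Scope ring_scope.
Local Open Scope classical_set_scope.

Section FTS.
Variables (R : realType) (S A : finType).

Definition fuzzy_set (mu : {ffun S -> R}) : Prop := forall x, 0 <= mu x <= 1.

(* mu(S) = max_{x in S} mu x  (values are >= 0, so 0 is a neutral element) *)
Definition fheight (mu : {ffun S -> R}) : R := \big[Num.max/0]_(x : S) mu x.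

Definition pseudo_ultrametric (d : S -> S -> R) : Prop :=
  (forall s t, 0 <= d s t <= 1) /\ (forall s, d s s = 0) /\
  (forall s t, d s t = d t s) /\
  (forall s t u, d s u <= Num.max (d s t) (d t u)).

Definition coupling (mu eta : {ffun S -> R}) (x : S -> S -> R) : Prop :=
  (forall u v, 0 <= x u v) /\
  (forall u, \big[Num.max/0]_(v : S) x u v = mu u) /\
  (forall v, \big[Num.max/0]_(u : S) x u v = eta v).

Definition coupling_cost (d : S -> S -> R) (x : S -> S -> R) : R :=
  \big[Num.max/0]_(u : S) \big[Num.max/0]_(v : S) Num.min (d u v) (x u v).

(* lifting \hat d (the minimum is written as the infimum of the attained values) *)
Definition lift (d : S -> S -> R) (mu eta : {ffun S -> R}) : R :=
  if fheight mu != fheight eta then 1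
  else inf [set r | exists x, coupling mu eta x /\ r = coupling_cost d x].

Definition lift_set (d : S -> S -> R) (mu : {ffun S -> R}) (Z : seq {ffun S -> R}) : R :=
  match Z with
  | [::] => 1
  | eta :: Z' => foldr (fun e acc => Num.min (lift d mu e) acc) (lift d mu eta) Z'
  end.

Definition hausdorff (d : S -> S -> R) (Y Z : seq {ffun S -> R}) : R :=
  match Y, Z with
  | [::], [::] => 0
  | _, _ => Num.max (\big[Num.max/0]_(mu <- Y) lift_set d mu Z)
                    (\big[Num.max/0]_(eta <- Z) lift_set d eta Y)
  end.

Definition Delta (gamma : R) (delta : S -> A -> seq {ffun S -> R})
  (d : S -> S -> R) : S -> S -> R :=
  fun s t => gamma * \big[Num.max/0]_(a : A) hausdorff d (delta s a) (delta t a).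

Definition least_fixpoint (gamma : R) (delta : S -> A -> seq {ffun S -> R})
  (d : S -> S -> R) : Prop :=
  pseudo_ultrametric d /\ (forall s t, Delta gamma delta d s t = d s t) /\
  (forall d', pseudo_ultrametric d' -> (forall s t, Delta gamma delta d' s t = d' s t) ->
     forall s t, d s t <= d' s t).

Definition supnorm (e : S -> S -> R) : R :=
  \big[Num.max/0]_(s : S) \big[Num.max/0]_(t : S) `|e s t|.

End FTS.

From Pilot Require Import Defs.
From HB Require Import structures.
From mathcomp Require Import all_boot all_order all_algebra.
From mathcomp Require Import all_classical all_reals all_analysis.
Import Order.TTheory GRing.Theory Num.Theory.
Local Open Scope ring_scope.
Local Open Scope classical_set_scope.

(* Delta is a gamma-contraction for the sup norm: the lifting, the distance to
   a finite set, the Hausdorff distance and the maximum over actions are all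
   built from max, min and infima, so raising d uniformly by k raises each of
   them by at most k.  Hence Delta^n(0) is within gamma^n of any fixpoint with
   values in [0, 1], and gamma^N <= eps by the choice of N. *)

Section MaxMinAdd.
Variable R : realDomainType.

Lemma le_max_add (a b a' b' k : R) : a <= a' + k -> b <= b' + k ->
  Num.max a b <= Num.max a' b' + k.
Proof.
move=> aa' bb'; rewrite ge_max; apply/andP; split.
  by apply: le_trans aa' _; rewrite lerD2r le_max lexx.
by apply: le_trans bb' _; rewrite lerD2r le_max lexx orbT.
Qed.

Lemma le_min_add (a b a' b' k : R) : a <= a' + k -> b <= b' + k ->
  Num.min a b <= Num.min a' b' + k.
Proof.
move=> aa' bb'; case: (lerP a' b') => _.
  by apply: le_trans aa'; rewrite ge_min lexx.
by apply: le_trans bb'; rewrite ge_min lexx orbT.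
Qed.

Lemma le_bigmax_add (I : Type) (r : seq I) (f g : I -> R) (k : R) :
  0 <= k -> (forall i, f i <= g i + k) ->
  \big[Num.max/0]_(i <- r) f i <= \big[Num.max/0]_(i <- r) g i + k.
Proof.
move=> k0 fg; elim: r => [|i r IHr]; first by rewrite !big_nil add0r.
by rewrite !big_cons; apply: le_max_add.
Qed.

End MaxMinAdd.

Lemma le_inf_image_add (R : realType) (T : Type) (X : set T) (f g : T -> R)
    (k : R) :
  has_lbound (f @` X) -> 0 <= k -> (forall x, X x -> f x <= g x + k) ->
  inf (f @` X) <= inf (g @` X) + k.
Proof.
move=> [m fXm] k0 fg; have [->|/set0P[x0 Xx0]] := eqVneq X set0.
  by rewrite !image_set0 inf0 lerDl.
rewrite -lerBlDr; apply: lb_le_inf; first by exists (g x0), x0.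
move=> _ [x Xx <-]; rewrite lerBlDr; apply: le_trans (fg x Xx).
by apply: ge_inf; [exists m | exists x].
Qed.

Section Lifting.
Variables (R : realType) (S : finType).
Implicit Types (mu eta : {ffun S -> R}) (Y Z : seq {ffun S -> R}).

Lemma coupling_cost_le_add (d d' : S -> S -> R) (k : R) x : 0 <= k ->
  (forall s t, d s t <= d' s t + k) ->
  coupling_cost d x <= coupling_cost d' x + k.
Proof.
move=> k0 dd'; apply: le_bigmax_add => // u; apply: le_bigmax_add => // v.
by apply: le_min_add => //; rewrite lerDl.
Qed.

Lemma lift_le_add (d d' : S -> S -> R) (k : R) mu eta : 0 <= k ->
  (forall s t, d s t <= d' s t + k) ->
  Defs.lift d mu eta <= Defs.lift d' mu eta + k.
Proof.
move=> k0 dd'; rewrite /Defs.lift; case: ifP => _; first by rewrite lerDl.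
have costsE dd : [set r | exists x, coupling mu eta x /\ r = coupling_cost dd x]
    = coupling_cost dd @` coupling mu eta.
  apply/seteqP; split=> r; first by case=> x [Cx ->]; exists x.
  by case=> x Cx <-; exists x.
rewrite !costsE; apply: le_inf_image_add => // [|x _].
  by exists 0 => _ [x _ <-]; apply: bigmax_ge_id.
exact: coupling_cost_le_add.
Qed.

Lemma lift_set_le_add (d d' : S -> S -> R) (k : R) mu Z : 0 <= k ->
  (forall s t, d s t <= d' s t + k) ->
  lift_set d mu Z <= lift_set d' mu Z + k.
Proof.
move=> k0 dd'; case: Z => [|eta Z] /=; first by rewrite lerDl.
have := lift_le_add d d' k mu eta k0 dd'.
elim: Z (Defs.lift d mu eta) (Defs.lift d' mu eta) => [|e Z IHZ] a a' aa' //=.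
by apply: le_min_add; [apply: lift_le_add | apply: IHZ].
Qed.

Lemma hausdorff_le_add (d d' : S -> S -> R) (k : R) Y Z : 0 <= k ->
  (forall s t, d s t <= d' s t + k) ->
  hausdorff d Y Z <= hausdorff d' Y Z + k.
Proof.
move=> k0 dd'.
have maxYZ : Num.max (\big[Num.max/0]_(mu <- Y) lift_set d mu Z)
                     (\big[Num.max/0]_(eta <- Z) lift_set d eta Y)
          <= Num.max (\big[Num.max/0]_(mu <- Y) lift_set d' mu Z)
                     (\big[Num.max/0]_(eta <- Z) lift_set d' eta Y) + k.
  by apply: le_max_add; apply: le_bigmax_add => // ?; apply: lift_set_le_add.
by case: Y maxYZ => [|? ?]; case: Z => [|? ?] //= _; rewrite add0r.
Qed.

Lemma supnorm_le (e : S -> S -> R) (c : R) : 0 <= c ->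
  (forall s t, `|e s t| <= c) -> supnorm e <= c.
Proof. by move=> c0 ec; do 2![apply: bigmax_le => // ? _]. Qed.

End Lifting.

Section Contraction.
Variables (R : realType) (S A : finType).
Variables (gamma : R) (delta : S -> A -> seq {ffun S -> R}).
Hypothesis gamma_ge0 : 0 <= gamma.

Local Notation Delta := (Delta gamma delta).

Lemma Delta_le_add (d d' : S -> S -> R) (k : R) : 0 <= k ->
  (forall s t, d s t <= d' s t + k) ->
  forall s t, Delta d s t <= Delta d' s t + gamma * k.
Proof.
move=> k0 dd' s t; rewrite /Defs.Delta -mulrDr ler_wpM2l //.
by apply: le_bigmax_add => // a; apply: hausdorff_le_add.
Qed.

Lemma Delta_dist_le (d d' : S -> S -> R) (k : R) : 0 <= k ->
  (forall s t, `|d s t - d' s t| <= k) ->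
  forall s t, `|Delta d s t - Delta d' s t| <= gamma * k.
Proof.
move=> k0 dd' s t; rewrite ler_distl; apply/andP; split.
  by rewrite lerBlDr; apply: Delta_le_add => // u v; apply: ler_distlCDr.
by apply: Delta_le_add => // u v; apply: ler_distlDr.
Qed.

Lemma iter_Delta_dist_fixpoint (d0 d : S -> S -> R) (c : R) :
  (forall s t, Delta d s t = d s t) -> 0 <= c ->
  (forall s t, `|d0 s t - d s t| <= c) ->
  forall n s t, `|iter n Delta d0 s t - d s t| <= gamma ^+ n * c.
Proof.
move=> dE c0 d0d; elim=> [|n IHn] s t; first by rewrite mul1r.
rewrite iterS -dE exprS -mulrA.
by apply: Delta_dist_le => //; rewrite mulr_ge0 ?exprn_ge0.
Qed.

End Contraction.

Lemma expr_le_of_ln_ratio (R : realType) (gamma eps : R) (N : nat) :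
  0 < gamma < 1 -> 0 < eps -> ln eps / ln gamma <= N%:R -> gamma ^+ N <= eps.
Proof.
move=> /andP[g0 g1] e0 le_ratio.
have lg_lt0 : ln gamma < 0 by apply: ln_lt0; rewrite g0 g1.
have ln_le : N%:R * ln gamma <= ln eps.
  by have := ler_wnM2r (ltW lg_lt0) le_ratio; rewrite divfK ?lt_eqF.
rewrite -ler_ln ?posrE ?exprn_gt0 // lnXn // -mulr_natr mulrC; exact: ln_le.
Qed.

Theorem theorem2 (R : realType) (S A : finType)
  (delta : S -> A -> seq {ffun S -> R})
  (Hdelta : forall s a mu, mu \in delta s a -> fuzzy_set mu)
  (gamma eps : R) (Hgamma : 0 < gamma < 1) (Heps : 0 < eps <= 1)
  (N : nat) (HN : (N : int) = Num.ceil (ln eps / ln gamma))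
  (df : S -> S -> R) (Hdf : least_fixpoint gamma delta df) :
  supnorm (fun s t => iter N (Delta gamma delta) (fun _ _ => 0) s t - df s t) <= eps.
Proof.
have [g0 _] := andP Hgamma; have g_ge0 := ltW g0; have [e0 _] := andP Heps.
have [[df01 _] [dfE _]] := Hdf.
have gammaN_le : gamma ^+ N <= eps.
  apply: expr_le_of_ln_ratio => //.
  by have := ceil_ge (ln eps / ln gamma); rewrite -HN pmulrn.
apply: le_trans gammaN_le; apply: supnorm_le => [|s t]; first exact: exprn_ge0.
rewrite -[gamma ^+ N]mulr1; apply: iter_Delta_dist_fixpoint => // u v.
by have /andP[df0 df1] := df01 u v; rewrite sub0r normrN ger0_norm.
Qed.
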